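(* Let $K\ge 1$, $c>0$, $P_{\max}>0$, and for $k,k'\in\{1,\dots,K\}$ let $a_{k,k'}\ge 0$, $d_k\ge 0$, $n_k>0$ with $a_{k,k}\ge d_k$, and $\gamma_k\ge 0$. Define on $[0,\infty)^K$ $$f_k(\mathbf{P})=\log_2\Big(\sum_{k'}a_{k,k'}P_{k'}+n_k\Big),\quad g_k(\mathbf{P})=\log_2\Big(\sum_{k'}a_{k,k'}P_{k'}-d_kP_k+n_k\Big),\quad R_k=c\,(f_k-g_k),$$ the first-order Taylor expansions at $\mathbf{P}_0$ $$\hat f_k(\mathbf{P},\mathbf{P}_0)=f_k(\mathbf{P}_0)+\frac{\sum_{k'}a_{k,k'}(P_{k'}-P_{0,k'})}{\ln 2\,(\sum_{k'}a_{k,k'}P_{0,k'}+n_k)},\quad \hat g_k(\mathbf{P},\mathbf{P}_0)=g_k(\mathbf{P}_0)+\frac{\sum_{k'}a_{k,k'}(P_{k'}-P_{0,k'})-d_k(P_k-P_{0,k})}{\ln 2\,(\sum_{k'}a_{k,k'}P_{0,k'}-d_kP_{0,k}+n_k)},$$ $\hat R_k(\mathbf{P},\mathbf{P}_0)=c(\hat f_k(\mathbf{P},\mathbf{P}_0)-g_k(\mathbf{P}))$, $\overline R_k(\mathbf{P},\mathbf{P}_0)=c(f_k(\mathbf{P})-\hat g_k(\mathbf{P},\mathbf{P}_0))$, $P_{\mathrm N}(\mathbf{P},x)=C_0+\sum_k\Delta_kP_k+\sum_k\beta_kx_k$ with $C_0>0$, $\Delta_k\ge1$, $\beta_k>0$,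 $$\mathrm{EE}(\mathbf{P})=\frac{\sum_kR_k(\mathbf{P})}{P_{\mathrm N}(\mathbf{P},(R_k(\mathbf{P}))_k)},\qquad \overline{\mathrm{EE}}(\mathbf{P},\mathbf{P}_0)=\frac{\sum_k\overline R_k(\mathbf{P},\mathbf{P}_0)}{P_{\mathrm N}(\mathbf{P},(\hat R_k(\mathbf{P},\mathbf{P}_0))_k)}.$$ Let $\mathcal F=\{\mathbf P: 0\le P_k\le P_{\max},\ \gamma_k(\sum_{k'}a_{k,k'}P_{k'}+n_k)-(1+\gamma_k)d_kP_k\le 0\ \ \forall k\}$, assumed nonempty. The Successive Lower-Bound Maximization (SLM) algorithm starts from some $\mathbf P^{(0)}\in\mathcal F$ and iterates $\mathbf P^{(n)}\in\arg\max_{\mathbf P\in\mathcal F}\overline{\mathrm{EE}}(\mathbf P,\mathbf P^{(n-1)})$. Then every limit point of the iterates $(\mathbf P^{(n)})$ generated by the SLM algorithm is a stationary point of the problem $\max_{\mathbf P\in\mathcal F}\mathrm{EE}(\mathbf P)$, and the SLM algorithm is globally convergent.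
   Context: Model: uplink network with $K$ users, $P_k$ the transmit power of user $k$; $c=\tau_uB/(\tau_u+\tau_p)$, $a_{k,k'}=\mathbb{E}\{|\mathrm{IS}_{k,k'}|^2\}$, $d_k=|\mathbb{E}\{\mathrm{DS}_k\}|^2$, $n_k$ effective noise power; $R_k$ is the rate of user $k$; $P_{\mathrm N}$ is the total network power (affine in the rates with positive coefficients); the constraint defining $\mathcal F$ is the QoS constraint $R_k\ge R_{k,\min}$ rewritten linearly with $\gamma_k=2^{\tau_cR_{k,\min}/(\tau_uB)}-1$. A stationary point of $\max_{\mathbf P\in\mathcal F}\mathrm{EE}(\mathbf P)$ is a point $\mathbf P^*\in\mathcal F$ with $\nabla\mathrm{EE}(\mathbf P^* )^{\top}(\mathbf P-\mathbf P^* )\le 0$ for all $\mathbf P\in\mathcal F$. ''Globally convergent'' means the stated limit-point property holds for any feasible initial point. *)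

From Stdlib Require Import Reals Lra List.
From Coquelicot Require Import Coquelicot.
Open Scope R_scope.

(* Vectors in R^K are represented as functions nat -> R; only the
   indices 0..K-1 are meaningful (users k = 1..K of the paper). *)

Definition sumK (K : nat) (f : nat -> R) : R :=
  fold_right Rplus 0 (map f (seq 0 K)).

Definition log2 (x : R) : R := ln x / ln 2.

Definition f_k (K : nat) (a : nat -> nat -> R) (n : nat -> R)
  (P : nat -> R) (k : nat) : R :=
  log2 (sumK K (fun k' => a k k' * P k') + n k).

Definition g_k (K : nat) (a : nat -> nat -> R) (d n : nat -> R)
  (P : nat -> R) (k : nat) : R :=
  log2 (sumK K (fun k' => a k k' * P k') - d k * P k + n k).

Definition R_k (K : nat) (c : R) (a : nat -> nat -> R) (d n : nat -> R)
  (P : nat -> R) (k : nat) : R :=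
  c * (f_k K a n P k - g_k K a d n P k).

Definition fhat_k (K : nat) (a : nat -> nat -> R) (n : nat -> R)
  (P P0 : nat -> R) (k : nat) : R :=
  f_k K a n P0 k +
  sumK K (fun k' => a k k' * (P k' - P0 k')) /
    (ln 2 * (sumK K (fun k' => a k k' * P0 k') + n k)).

Definition ghat_k (K : nat) (a : nat -> nat -> R) (d n : nat -> R)
  (P P0 : nat -> R) (k : nat) : R :=
  g_k K a d n P0 k +
  (sumK K (fun k' => a k k' * (P k' - P0 k')) - d k * (P k - P0 k)) /
    (ln 2 * (sumK K (fun k' => a k k' * P0 k') - d k * P0 k + n k)).

Definition Rhat_k (K : nat) (c : R) (a : nat -> nat -> R) (d n : nat -> R)
  (P P0 : nat -> R) (k : nat) : R :=
  c * (fhat_k K a n P P0 k - g_k K a d n P k).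

Definition Rbar_k (K : nat) (c : R) (a : nat -> nat -> R) (d n : nat -> R)
  (P P0 : nat -> R) (k : nat) : R :=
  c * (f_k K a n P k - ghat_k K a d n P P0 k).

Definition PN (K : nat) (C0 : R) (Delta beta : nat -> R)
  (P x : nat -> R) : R :=
  C0 + sumK K (fun k => Delta k * P k) + sumK K (fun k => beta k * x k).

Definition EE (K : nat) (c : R) (a : nat -> nat -> R) (d n : nat -> R)
  (C0 : R) (Delta beta : nat -> R) (P : nat -> R) : R :=
  sumK K (fun k => R_k K c a d n P k) /
  PN K C0 Delta beta P (fun k => R_k K c a d n P k).

Definition EEbar (K : nat) (c : R) (a : nat -> nat -> R) (d n : nat -> R)
  (C0 : R) (Delta beta : nat -> R) (P P0 : nat -> R) : R :=
  sumK K (fun k => Rbar_k K c a d n P P0 k) /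
  PN K C0 Delta beta P (fun k => Rhat_k K c a d n P P0 k).

Definition feasible (K : nat) (Pmax : R) (a : nat -> nat -> R)
  (d n gam : nat -> R) (P : nat -> R) : Prop :=
  forall k, (k < K)%nat ->
    0 <= P k <= Pmax /\
    gam k * (sumK K (fun k' => a k k' * P k') + n k)
      - (1 + gam k) * d k * P k <= 0.

Definition upd (x : nat -> R) (k : nat) (t : R) : nat -> R :=
  fun j => if Nat.eqb j k then t else x j.

Definition partial (F : (nat -> R) -> R) (x : nat -> R) (k : nat) : R :=
  Derive (fun t => F (upd x k t)) (x k).

Definition stationary (K : nat) (Fs : (nat -> R) -> Prop)
  (F : (nat -> R) -> R) (Pst : nat -> R) : Prop :=
  Fs Pst /\
  forall P, Fs P -> sumK K (fun k => partial F Pst k * (P k - Pst k)) <= 0.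

Definition is_argmax_on (Fs : (nat -> R) -> Prop) (f : (nat -> R) -> R)
  (x : nat -> R) : Prop :=
  Fs x /\ forall y, Fs y -> f y <= f x.

Definition limit_point (K : nat) (Pseq : nat -> nat -> R) (Pst : nat -> R) : Prop :=
  forall eps : R, 0 < eps -> forall N : nat, exists m : nat, (N <= m)%nat /\
    forall k, (k < K)%nat -> Rabs (Pseq m k - Pst k) < eps.

From Stdlib Require Import Reals Lra Lia List FunctionalExtensionality.
From Coquelicot Require Import Coquelicot.
Open Scope R_scope.

(* SLM is a minorize-maximize scheme.  Since [log2] is concave, replacing a logarithm by its
   tangent at [P0] over- or underestimates it, so [Rbar_k <= R_k <= Rhat_k] with equality at
   [P = P0]; hence [EEbar _ P0] is a minorant of [EE] touching it at [P0], and [EE] increases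
   along the iterates.  At a limit point [P*], continuity turns
   [EEbar Q P_m <= EEbar P_(m+1) P_m <= EE P_(m+1) <= EE P*] into [EEbar Q P* <= EEbar P* P*]
   for every feasible [Q]: [P*] maximizes the minorant [EEbar _ P*] over the convex set [F].
   The minorant is tangent to [EE] at [P*] (same value, same directional derivatives), so its
   first-order optimality condition along the segment [P*, Q] is the stationarity of [EE]. *)

Lemma fold_right_Rplus_init (l : list R) (r : R) :
  fold_right Rplus r l = fold_right Rplus 0 l + r.
Proof. induction l as [|x l IH]; simpl; [lra | rewrite IH; lra]. Qed.

Lemma sumK_S m f : sumK (S m) f = sumK m f + f m.
Proof.
  unfold sumK. rewrite seq_S, map_app, fold_right_app; simpl.
  rewrite fold_right_Rplus_init. lra.
Qed.

Lemma sumK_ext m f g :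
  (forall k, (k < m)%nat -> f k = g k) -> sumK m f = sumK m g.
Proof.
  induction m as [|m IH]; intros H; [reflexivity|].
  rewrite !sumK_S, IH, H; auto.
Qed.

Lemma sumK_plus m f g : sumK m (fun k => f k + g k) = sumK m f + sumK m g.
Proof. induction m as [|m IH]; [unfold sumK; simpl; lra|]. rewrite !sumK_S, IH; lra. Qed.

Lemma sumK_minus m f g : sumK m (fun k => f k - g k) = sumK m f - sumK m g.
Proof. induction m as [|m IH]; [unfold sumK; simpl; lra|]. rewrite !sumK_S, IH; lra. Qed.

Lemma sumK_scal m r f : sumK m (fun k => r * f k) = r * sumK m f.
Proof. induction m as [|m IH]; [unfold sumK; simpl; lra|]. rewrite !sumK_S, IH; lra. Qed.

Lemma sumK_scalr m r f : sumK m (fun k => f k * r) = sumK m f * r.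
Proof. induction m as [|m IH]; [unfold sumK; simpl; lra|]. rewrite !sumK_S, IH; lra. Qed.

Lemma sumK_zero m : sumK m (fun _ => 0) = 0.
Proof. induction m as [|m IH]; [reflexivity|]. rewrite sumK_S, IH. ring. Qed.

Lemma sumK_le m f g :
  (forall k, (k < m)%nat -> f k <= g k) -> sumK m f <= sumK m g.
Proof.
  induction m as [|m IH]; intros H; [unfold sumK; simpl; lra|].
  rewrite !sumK_S. pose proof (H m (Nat.lt_succ_diag_r m)).
  enough (sumK m f <= sumK m g) by lra. apply IH. intros k Hk. apply H. lia.
Qed.

Lemma sumK_nonneg m f : (forall k, (k < m)%nat -> 0 <= f k) -> 0 <= sumK m f.
Proof.
  intros H. rewrite <- (sumK_zero m). apply sumK_le; auto.
Qed.

Lemma sumK_ge_term m f j :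
  (forall k, (k < m)%nat -> 0 <= f k) -> (j < m)%nat -> f j <= sumK m f.
Proof.
  induction m as [|m IH]; intros H Hj; [lia|]. rewrite sumK_S.
  destruct (Nat.eq_dec j m) as [->|Hjm].
  - enough (0 <= sumK m f) by lra. apply sumK_nonneg; auto.
  - enough (f j <= sumK m f) by (specialize (H m (Nat.lt_succ_diag_r m)); lra).
    apply IH; [intros k Hk; apply H|]; lia.
Qed.

Lemma sumK_exchange m p (F : nat -> nat -> R) :
  sumK m (fun j => sumK p (fun k => F j k)) = sumK p (fun k => sumK m (fun j => F j k)).
Proof.
  induction m as [|m IH].
  - symmetry. apply sumK_zero.
  - rewrite sumK_S, IH, <- sumK_plus. apply sumK_ext. intros. rewrite sumK_S. reflexivity.
Qed.

Definition unit_vec (j : nat) : nat -> R := upd (fun _ => 0) j 1.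

Lemma sumK_unit_vec m k (v : nat -> R) :
  (k < m)%nat -> sumK m (fun j => unit_vec j k * v j) = v k.
Proof.
  intros Hk. induction m as [|m IH]; [lia|]. rewrite sumK_S. unfold unit_vec at 2, upd.
  destruct (Nat.eqb_spec k m) as [->|Hkm].
  - rewrite (sumK_ext m _ (fun _ => 0)), sumK_zero by
      (intros j Hj; unfold unit_vec, upd; destruct (Nat.eqb_spec m j); [lia | ring]).
    ring.
  - rewrite IH by lia. ring.
Qed.

Definition line (x v : nat -> R) (t : R) : nat -> R := fun i => x i + t * v i.

Lemma line_0 x v : line x v 0 = x.
Proof. apply functional_extensionality. intros i. unfold line. ring. Qed.

Lemma upd_line x j t : upd x j t = line x (unit_vec j) (t - x j).
Proof.
  apply functional_extensionality. intros i. unfold line, unit_vec, upd.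
  destruct (Nat.eqb_spec i j) as [->|]; ring.
Qed.

Lemma sumK_line m (w x v : nat -> R) t :
  sumK m (fun k => w k * line x v t k) =
  sumK m (fun k => w k * x k) + t * sumK m (fun k => w k * v k).
Proof.
  induction m as [|m IH]; [unfold sumK; simpl; lra|].
  rewrite !sumK_S, IH. unfold line. ring.
Qed.

Lemma continuous_of_ex_derive (g : R -> R) y : ex_derive g y -> continuous g y.
Proof. exact (@ex_derive_continuous R_AbsRing R_NormedModule g y). Qed.

Section Continuity.

Variable K : nat.

Definition cont_at (F : (nat -> R) -> R) (x : nat -> R) : Prop :=
  forall e, 0 < e -> exists del, 0 < del /\ forall y,
    (forall k, (k < K)%nat -> Rabs (y k - x k) < del) -> Rabs (F y - F x) < e.

Lemma cont_at_ext F G x : (forall y, F y = G y) -> cont_at G x -> cont_at F x.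
Proof.
  intros HFG HG e He. destruct (HG e He) as [del [Hdel Hy]].
  exists del. split; auto. intros y Hyx. rewrite !HFG. auto.
Qed.

Lemma cont_at_const r x : cont_at (fun _ => r) x.
Proof. intros e He. exists 1. split; [lra|]. intros. rewrite Rminus_diag, Rabs_R0. auto. Qed.

Lemma cont_at_coord j x : (j < K)%nat -> cont_at (fun y => y j) x.
Proof. intros Hj e He. exists e. auto. Qed.

Lemma cont_at_comp F g x :
  cont_at F x -> continuous g (F x) -> cont_at (fun y => g (F y)) x.
Proof.
  intros HF Hg e He.
  destruct (proj1 (filterlim_locally _ _) Hg (mkposreal e He)) as [del Hdel].
  destruct (HF del (cond_pos del)) as [del' [Hdel' HFy]].
  exists del'. split; auto. intros y Hy. apply (Hdel (F y)), HFy, Hy.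
Qed.

Lemma cont_at_plus F G x :
  cont_at F x -> cont_at G x -> cont_at (fun y => F y + G y) x.
Proof.
  intros HF HG e He.
  destruct (HF (e / 2)) as [dF [HdF HFy]]; [lra|].
  destruct (HG (e / 2)) as [dG [HdG HGy]]; [lra|].
  exists (Rmin dF dG). split; [apply Rmin_pos; auto|]. intros y Hy.
  assert (Rabs (F y - F x) < e / 2).
  { apply HFy. intros k Hk. pose proof (Hy k Hk). pose proof (Rmin_l dF dG). lra. }
  assert (Rabs (G y - G x) < e / 2).
  { apply HGy. intros k Hk. pose proof (Hy k Hk). pose proof (Rmin_r dF dG). lra. }
  replace (F y + G y - (F x + G x)) with ((F y - F x) + (G y - G x)) by ring.
  pose proof (Rabs_triang (F y - F x) (G y - G x)). lra.
Qed.

Lemma cont_at_opp F x : cont_at F x -> cont_at (fun y => - F y) x.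
Proof.
  intros HF. apply (cont_at_comp F Ropp); auto.
  apply continuous_of_ex_derive. auto_derive. auto.
Qed.

Lemma cont_at_minus F G x :
  cont_at F x -> cont_at G x -> cont_at (fun y => F y - G y) x.
Proof. intros HF HG. apply (cont_at_plus F (fun y => - G y)), cont_at_opp; auto. Qed.

(* Polarization reduces the product to squares, which are continuous functions of one variable. *)
Lemma cont_at_mult F G x :
  cont_at F x -> cont_at G x -> cont_at (fun y => F y * G y) x.
Proof.
  intros HF HG.
  apply (cont_at_ext _
    (fun y => / 4 * ((F y + G y) * (F y + G y) - (F y - G y) * (F y - G y)))).
  { intros y. field. }
  apply (cont_at_comp (fun y => (F y + G y) * (F y + G y) - (F y - G y) * (F y - G y))
           (fun s => / 4 * s)); [| apply continuous_of_ex_derive; auto_derive; auto].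
  assert (Hsq : continuous (fun s => s * s) (F x + G x) /\
                continuous (fun s => s * s) (F x - G x)).
  { split; apply continuous_of_ex_derive; auto_derive; auto. }
  apply cont_at_minus.
  - apply (cont_at_comp (fun y => F y + G y) (fun s => s * s)); [apply cont_at_plus|]; tauto.
  - apply (cont_at_comp (fun y => F y - G y) (fun s => s * s)); [apply cont_at_minus|]; tauto.
Qed.

Lemma cont_at_div F G x :
  cont_at F x -> cont_at G x -> G x <> 0 -> cont_at (fun y => F y / G y) x.
Proof.
  intros HF HG HGx. apply (cont_at_mult F (fun y => / G y)); auto.
  apply (cont_at_comp G Rinv); auto. apply continuous_of_ex_derive. auto_derive. auto.
Qed.

Lemma cont_at_ln F x : cont_at F x -> 0 < F x -> cont_at (fun y => ln (F y)) x.
Proof. intros HF HFx. apply (cont_at_comp F ln); auto. apply continuous_ln, HFx. Qed.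

Lemma cont_at_sumK m (F : nat -> (nat -> R) -> R) x :
  (forall k, (k < m)%nat -> cont_at (F k) x) -> cont_at (fun y => sumK m (fun k => F k y)) x.
Proof.
  induction m as [|m IH]; intros H.
  - apply (cont_at_ext _ (fun _ => 0)); [reflexivity | apply cont_at_const].
  - apply (cont_at_ext _ (fun y => sumK m (fun k => F k y) + F m y)); [intros; apply sumK_S|].
    apply cont_at_plus; auto.
Qed.

Lemma ge_at_limit_point h (Pseq : nat -> nat -> R) Pst M N :
  cont_at h Pst -> limit_point K Pseq Pst ->
  (forall m, (N <= m)%nat -> M <= h (Pseq m)) -> M <= h Pst.
Proof.
  intros Hh Hlim HM. destruct (Rle_or_lt M (h Pst)) as [|Hlt]; auto.
  destruct (Hh (M - h Pst)) as [del [Hdel Hy]]; [lra|].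
  destruct (Hlim del Hdel N) as [m [HNm Hm]].
  specialize (Hy _ Hm). specialize (HM m HNm). apply Rabs_def2 in Hy. lra.
Qed.

End Continuity.

Ltac solve_cont_at :=
  repeat (first
    [ apply cont_at_const
    | apply cont_at_coord; assumption
    | apply cont_at_minus
    | apply cont_at_plus
    | apply cont_at_mult
    | apply cont_at_sumK; intros ]).

Lemma ln2_pos : 0 < ln 2.
Proof. rewrite <- ln_1. apply ln_increasing; lra. Qed.

Lemma log2_le X Y : 0 < X -> X <= Y -> log2 X <= log2 Y.
Proof.
  intros HX HXY. unfold log2. pose proof ln2_pos.
  apply Rmult_le_compat_r; [left; apply Rinv_0_lt_compat; auto|].
  destruct HXY as [HXY| ->]; [left; apply ln_increasing | right]; auto.
Qed.

Lemma log2_le_tangent X Y :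
  0 < X -> 0 < Y -> log2 Y <= log2 X + (Y - X) / (ln 2 * X).
Proof.
  intros HX HY. pose proof ln2_pos.
  pose proof (exp_ineq1_le (ln (Y / X))) as Hexp.
  rewrite exp_ln, ln_div in Hexp by (try apply Rdiv_lt_0_compat; auto).
  replace ((Y - X) / (ln 2 * X)) with ((Y / X - 1) / ln 2) by (field; lra).
  unfold log2, Rdiv. rewrite <- Rmult_plus_distr_r.
  apply Rmult_le_compat_r; [left; apply Rinv_0_lt_compat |]; lra.
Qed.

Definition linear_form (K : nat) (Phi : (nat -> R) -> R) : Prop :=
  forall v, Phi v = sumK K (fun j => Phi (unit_vec j) * v j).

Section LinearForms.

Variable K : nat.

Lemma linear_form_ext Phi Psi :
  (forall v, Phi v = Psi v) -> linear_form K Psi -> linear_form K Phi.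
Proof.
  intros H HPsi v. rewrite H, HPsi. apply sumK_ext. intros. rewrite H. reflexivity.
Qed.

Lemma linear_form_coord k : (k < K)%nat -> linear_form K (fun v => v k).
Proof. intros Hk v. rewrite sumK_unit_vec; auto. Qed.

Lemma linear_form_scal r Psi : linear_form K Psi -> linear_form K (fun v => r * Psi v).
Proof. intros H v. rewrite H, <- sumK_scal. apply sumK_ext. intros. ring. Qed.

Lemma linear_form_div r Psi : linear_form K Psi -> linear_form K (fun v => Psi v / r).
Proof. intros H v. rewrite H. unfold Rdiv. rewrite <- sumK_scalr. apply sumK_ext. intros. ring. Qed.

Lemma linear_form_plus Phi Psi :
  linear_form K Phi -> linear_form K Psi -> linear_form K (fun v => Phi v + Psi v).
Proof. intros H1 H2 v. rewrite H1, H2, <- sumK_plus. apply sumK_ext. intros. ring. Qed.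

Lemma linear_form_minus Phi Psi :
  linear_form K Phi -> linear_form K Psi -> linear_form K (fun v => Phi v - Psi v).
Proof. intros H1 H2 v. rewrite H1, H2, <- sumK_minus. apply sumK_ext. intros. ring. Qed.

Lemma linear_form_sumK m (Psi : nat -> (nat -> R) -> R) :
  (forall k, (k < m)%nat -> linear_form K (Psi k)) ->
  linear_form K (fun v => sumK m (fun k => Psi k v)).
Proof.
  intros H v.
  rewrite (sumK_ext m _ (fun k => sumK K (fun j => Psi k (unit_vec j) * v j)))
    by (intros; apply H; auto).
  rewrite sumK_exchange. apply sumK_ext. intros. rewrite sumK_scalr. reflexivity.
Qed.

End LinearForms.

Lemma is_derive_sumK m (F : nat -> R -> R) (dF : nat -> R) t0 :
  (forall k, (k < m)%nat -> is_derive (F k) t0 (dF k)) ->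
  is_derive (fun t => sumK m (fun k => F k t)) t0 (sumK m dF).
Proof.
  induction m as [|m IH]; intros H.
  - apply (@is_derive_const R_AbsRing R_NormedModule 0).
  - rewrite sumK_S.
    apply (@is_derive_ext R_AbsRing R_NormedModule
             (fun t => plus (sumK m (fun k => F k t)) (F m t))).
    { intros t. rewrite sumK_S. reflexivity. }
    apply (is_derive_plus (fun t => sumK m (fun k => F k t)) (F m)); auto.
Qed.

Lemma derive_nonpos_of_max_right (phi : R -> R) D :
  is_derive phi 0 D -> (forall t, 0 < t <= 1 -> phi t <= phi 0) -> D <= 0.
Proof.
  intros Hd Hmax. apply is_derive_Reals in Hd.
  destruct (Rle_or_lt D 0) as [|HD]; auto.
  destruct (Hd (D / 2)) as [del Hdel]; [lra|].
  set (h := Rmin (del / 2) 1).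
  assert (Hh : 0 < h <= 1 /\ h <= del / 2).
  { pose proof (cond_pos del). unfold h. repeat split;
      [apply Rmin_pos; lra | apply Rmin_r | apply Rmin_l]. }
  specialize (Hdel h ltac:(lra)).
  rewrite Rabs_pos_eq, Rplus_0_l in Hdel by lra.
  specialize (Hdel ltac:(pose proof (cond_pos del); lra)).
  apply Rabs_def2 in Hdel. specialize (Hmax h (proj1 Hh)).
  assert ((phi h - phi 0) / h <= 0).
  { unfold Rdiv. apply Rmult_le_0_r; [lra | left; apply Rinv_0_lt_compat; lra]. }
  lra.
Qed.

Section Model.

Variables (K : nat) (c : R) (a : nat -> nat -> R) (d n : nat -> R)
  (C0 : R) (Delta beta : nat -> R).

Hypothesis Hc : 0 <= c.
Hypothesis Ha : forall k k', (k < K)%nat -> (k' < K)%nat -> 0 <= a k k'.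
Hypothesis Hd : forall k, (k < K)%nat -> 0 <= d k.
Hypothesis Hn : forall k, (k < K)%nat -> 0 < n k.
Hypothesis Hda : forall k, (k < K)%nat -> d k <= a k k.
Hypothesis HC0 : 0 < C0.
Hypothesis HDelta : forall k, (k < K)%nat -> 0 <= Delta k.
Hypothesis Hbeta : forall k, (k < K)%nat -> 0 <= beta k.

Local Notation RK := (R_k K c a d n).
Local Notation RbarK := (Rbar_k K c a d n).
Local Notation RhatK := (Rhat_k K c a d n).
Local Notation PNK := (PN K C0 Delta beta).
Local Notation EEK := (EE K c a d n C0 Delta beta).
Local Notation EEbarK := (EEbar K c a d n C0 Delta beta).

Definition nonneg (P : nat -> R) : Prop := forall k, (k < K)%nat -> 0 <= P k.

Definition arg_f (P : nat -> R) k : R := sumK K (fun k' => a k k' * P k') + n k.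
Definition arg_g (P : nat -> R) k : R := sumK K (fun k' => a k k' * P k') - d k * P k + n k.

Lemma arg_g_pos_le P k :
  nonneg P -> (k < K)%nat -> 0 < arg_g P k /\ arg_g P k <= arg_f P k.
Proof.
  intros HP Hk. unfold arg_g, arg_f.
  assert (a k k * P k <= sumK K (fun k' => a k k' * P k')).
  { apply (sumK_ge_term K (fun k' => a k k' * P k')); auto.
    intros. apply Rmult_le_pos; auto. }
  assert (d k * P k <= a k k * P k) by (apply Rmult_le_compat_r; auto).
  assert (0 <= d k * P k) by (apply Rmult_le_pos; auto).
  specialize (Hn k Hk). lra.
Qed.

Lemma R_k_nonneg P k : nonneg P -> (k < K)%nat -> 0 <= RK P k.
Proof.
  intros HP Hk. destruct (arg_g_pos_le P k HP Hk) as [Hg Hgf].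
  pose proof (log2_le _ _ Hg Hgf).
  apply Rmult_le_pos; auto. change (0 <= log2 (arg_f P k) - log2 (arg_g P k)). lra.
Qed.

Lemma arg_f_sub P P0 k :
  sumK K (fun k' => a k k' * (P k' - P0 k')) = arg_f P k - arg_f P0 k.
Proof.
  unfold arg_f.
  rewrite (sumK_ext K _ (fun k' => a k k' * P k' - a k k' * P0 k')) by (intros; ring).
  rewrite sumK_minus. ring.
Qed.

Lemma arg_g_sub P P0 k :
  sumK K (fun k' => a k k' * (P k' - P0 k')) - d k * (P k - P0 k) = arg_g P k - arg_g P0 k.
Proof. rewrite arg_f_sub. unfold arg_f, arg_g. ring. Qed.

Lemma R_k_le_Rhat_k P P0 k :
  nonneg P -> nonneg P0 -> (k < K)%nat -> RK P k <= RhatK P P0 k.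
Proof.
  intros HP HP0 Hk.
  destruct (arg_g_pos_le P k HP Hk) as [Hg Hgf].
  destruct (arg_g_pos_le P0 k HP0 Hk) as [Hg0 Hgf0].
  unfold R_k, Rhat_k, fhat_k. rewrite arg_f_sub.
  change (f_k K a n P k) with (log2 (arg_f P k)).
  change (f_k K a n P0 k) with (log2 (arg_f P0 k)). fold (arg_f P0 k).
  pose proof (log2_le_tangent (arg_f P0 k) (arg_f P k) ltac:(lra) ltac:(lra)).
  apply Rmult_le_compat_l; [auto | lra].
Qed.

Lemma Rbar_k_le_R_k P P0 k :
  nonneg P -> nonneg P0 -> (k < K)%nat -> RbarK P P0 k <= RK P k.
Proof.
  intros HP HP0 Hk.
  destruct (arg_g_pos_le P k HP Hk) as [Hg Hgf].
  destruct (arg_g_pos_le P0 k HP0 Hk) as [Hg0 Hgf0].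
  unfold R_k, Rbar_k, ghat_k. rewrite arg_g_sub.
  change (g_k K a d n P k) with (log2 (arg_g P k)).
  change (g_k K a d n P0 k) with (log2 (arg_g P0 k)). fold (arg_g P0 k).
  pose proof (log2_le_tangent (arg_g P0 k) (arg_g P k) Hg0 Hg).
  apply Rmult_le_compat_l; [auto | lra].
Qed.

Lemma Rbar_k_self P k : RbarK P P k = RK P k.
Proof.
  unfold Rbar_k, R_k, ghat_k. rewrite arg_g_sub, Rminus_diag. unfold Rdiv. ring.
Qed.

Lemma Rhat_k_self P k : RhatK P P k = RK P k.
Proof.
  unfold Rhat_k, R_k, fhat_k. rewrite arg_f_sub, Rminus_diag. unfold Rdiv. ring.
Qed.

Lemma PN_pos P r : nonneg P -> nonneg r -> 0 < PNK P r.
Proof.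
  intros HP Hr. unfold PN.
  assert (0 <= sumK K (fun k => Delta k * P k))
    by (apply sumK_nonneg; intros; apply Rmult_le_pos; auto).
  assert (0 <= sumK K (fun k => beta k * r k))
    by (apply sumK_nonneg; intros; apply Rmult_le_pos; auto).
  lra.
Qed.

Lemma PN_R_k_pos P : nonneg P -> 0 < PNK P (fun k => RK P k).
Proof. intros HP. apply PN_pos; auto. intros k Hk. apply R_k_nonneg; auto. Qed.

Lemma PN_R_k_le_Rhat_k P P0 :
  nonneg P -> nonneg P0 -> PNK P (fun k => RK P k) <= PNK P (fun k => RhatK P P0 k).
Proof.
  intros HP HP0. unfold PN. apply Rplus_le_compat_l, sumK_le. intros k Hk.
  apply Rmult_le_compat_l; auto. apply R_k_le_Rhat_k; auto.
Qed.

Lemma EE_nonneg P : nonneg P -> 0 <= EEK P.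
Proof.
  intros HP. unfold EE. apply Rdiv_le_0_compat; [|apply PN_R_k_pos; auto].
  apply sumK_nonneg. intros. apply R_k_nonneg; auto.
Qed.

Lemma EEbar_self P : EEbarK P P = EEK P.
Proof.
  unfold EEbar, EE, PN.
  rewrite (sumK_ext K (fun k => RbarK P P k) (fun k => RK P k))
    by (intros; apply Rbar_k_self).
  rewrite (sumK_ext K (fun k => beta k * RhatK P P k) (fun k => beta k * RK P k))
    by (intros; rewrite Rhat_k_self; reflexivity).
  reflexivity.
Qed.

(* No sign condition on [EEbar] is needed: when its numerator is negative, [0 <= EE P]. *)
Lemma EEbar_le_EE P P0 : nonneg P -> nonneg P0 -> EEbarK P P0 <= EEK P.
Proof.
  intros HP HP0. unfold EEbar.
  set (num := sumK K (fun k => RbarK P P0 k)).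
  set (den := PNK P (fun k => RhatK P P0 k)).
  assert (Hnum : num <= sumK K (fun k => RK P k))
    by (apply sumK_le; intros; apply Rbar_k_le_R_k; auto).
  pose proof (PN_R_k_pos P HP) as Hpos.
  pose proof (PN_R_k_le_Rhat_k P P0 HP HP0) as Hden.
  pose proof (EE_nonneg P HP) as HEE.
  destruct (Rle_or_lt 0 num) as [Hnum0|Hnum0].
  - apply (Rle_trans _ (num / PNK P (fun k => RK P k))).
    + apply Rmult_le_compat_l; auto. apply Rinv_le_contravar; auto.
    + apply Rmult_le_compat_r; auto. left. apply Rinv_0_lt_compat. auto.
  - enough (num / den < 0) by lra.
    apply Rdiv_neg_pos; auto. fold den in Hden. lra.
Qed.

Lemma cont_at_log2 F x : cont_at K F x -> 0 < F x -> cont_at K (fun y => log2 (F y)) x.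
Proof.
  intros HF HFx. pose proof ln2_pos. unfold log2.
  apply cont_at_div; [apply cont_at_ln; auto | apply cont_at_const | lra].
Qed.

Lemma cont_at_R_k x k : nonneg x -> (k < K)%nat -> cont_at K (fun y => RK y k) x.
Proof.
  intros Hx Hk. destruct (arg_g_pos_le x k Hx Hk) as [Hg Hgf].
  unfold R_k, f_k, g_k.
  apply cont_at_mult; [apply cont_at_const|].
  apply cont_at_minus; apply cont_at_log2; solve_cont_at;
    cbv beta; fold (arg_f x k) (arg_g x k); lra.
Qed.

Lemma cont_at_EE x : nonneg x -> cont_at K EEK x.
Proof.
  intros Hx. pose proof (PN_R_k_pos x Hx). unfold EE, PN.
  apply cont_at_div; [| | unfold PN in *; lra].
  - apply cont_at_sumK. intros. apply cont_at_R_k; auto.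
  - apply cont_at_plus; [solve_cont_at|]. apply cont_at_sumK. intros.
    apply cont_at_mult; [apply cont_at_const | apply cont_at_R_k; auto].
Qed.

Lemma cont_at_EEbar_ref Q x :
  nonneg x -> nonneg Q -> cont_at K (fun P0 => EEbarK Q P0) x.
Proof.
  intros Hx HQ. pose proof ln2_pos.
  pose proof (PN_R_k_pos Q HQ). pose proof (PN_R_k_le_Rhat_k Q x HQ Hx).
  unfold EEbar.
  apply cont_at_div; [| | lra].
  - apply cont_at_sumK. intros k Hk. destruct (arg_g_pos_le x k Hx Hk) as [Hg Hgf].
    unfold Rbar_k, ghat_k.
    apply cont_at_mult; [apply cont_at_const|]. apply cont_at_minus; [apply cont_at_const|].
    apply cont_at_plus; [apply cont_at_log2; [solve_cont_at | fold (arg_g x k); lra]|].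
    apply cont_at_div; [solve_cont_at | solve_cont_at |].
    fold (arg_g x k). apply Rgt_not_eq, Rmult_lt_0_compat; auto.
  - unfold PN. apply cont_at_plus; [solve_cont_at|]. apply cont_at_sumK. intros k Hk.
    destruct (arg_g_pos_le x k Hx Hk) as [Hg Hgf].
    apply cont_at_mult; [apply cont_at_const|].
    unfold Rhat_k, fhat_k.
    apply cont_at_mult; [apply cont_at_const|]. apply cont_at_minus; [|apply cont_at_const].
    apply cont_at_plus; [apply cont_at_log2; [solve_cont_at | fold (arg_f x k); lra]|].
    apply cont_at_div; [solve_cont_at | solve_cont_at |].
    fold (arg_f x k). apply Rgt_not_eq, Rmult_lt_0_compat; lra.
Qed.

Definition av (v : nat -> R) k : R := sumK K (fun k' => a k k' * v k').

Definition drate (x v : nat -> R) k : R :=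
  c * (av v k / (ln 2 * arg_f x k) - (av v k - d k * v k) / (ln 2 * arg_g x k)).

Lemma arg_f_line x v t k : arg_f (line x v t) k = arg_f x k + t * av v k.
Proof. unfold arg_f, av. rewrite sumK_line. ring. Qed.

Lemma arg_g_line x v t k : arg_g (line x v t) k = arg_g x k + t * (av v k - d k * v k).
Proof. unfold arg_g, av. rewrite sumK_line. unfold line. ring. Qed.

Lemma sumK_line_sub x v t k :
  sumK K (fun k' => a k k' * (line x v t k' - x k')) = t * av v k.
Proof. rewrite arg_f_sub, arg_f_line. ring. Qed.

Lemma is_derive_R_k_line x v k :
  nonneg x -> (k < K)%nat -> is_derive (fun t => RK (line x v t) k) 0 (drate x v k).
Proof.
  intros Hx Hk. destruct (arg_g_pos_le x k Hx Hk) as [Hg Hgf]. pose proof ln2_pos.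
  apply (@is_derive_ext R_AbsRing R_NormedModule
    (fun t => c * (log2 (arg_f x k + t * av v k) - log2 (arg_g x k + t * (av v k - d k * v k))))).
  { intros t. unfold R_k, f_k, g_k. fold (arg_f (line x v t) k) (arg_g (line x v t) k).
    rewrite arg_f_line, arg_g_line. reflexivity. }
  unfold drate, log2. auto_derive; rewrite !Rmult_0_l, !Rplus_0_r; [lra | field; lra].
Qed.

Lemma is_derive_Rbar_k_line x v k :
  nonneg x -> (k < K)%nat -> is_derive (fun t => RbarK (line x v t) x k) 0 (drate x v k).
Proof.
  intros Hx Hk. destruct (arg_g_pos_le x k Hx Hk) as [Hg Hgf]. pose proof ln2_pos.
  apply (@is_derive_ext R_AbsRing R_NormedModule
    (fun t => c * (log2 (arg_f x k + t * av v k) -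
                   (log2 (arg_g x k) + t * (av v k - d k * v k) / (ln 2 * arg_g x k))))).
  { intros t. unfold Rbar_k, ghat_k, f_k. rewrite arg_g_sub, arg_g_line.
    fold (arg_f (line x v t) k) (arg_g x k). rewrite arg_f_line.
    replace (arg_g x k + t * (av v k - d k * v k) - arg_g x k)
      with (t * (av v k - d k * v k)) by ring.
    reflexivity. }
  unfold drate, log2. auto_derive; rewrite !Rmult_0_l, !Rplus_0_r; [lra | field; lra].
Qed.

Lemma is_derive_Rhat_k_line x v k :
  nonneg x -> (k < K)%nat -> is_derive (fun t => RhatK (line x v t) x k) 0 (drate x v k).
Proof.
  intros Hx Hk. destruct (arg_g_pos_le x k Hx Hk) as [Hg Hgf]. pose proof ln2_pos.
  apply (@is_derive_ext R_AbsRing R_NormedModule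
    (fun t => c * (log2 (arg_f x k) + t * av v k / (ln 2 * arg_f x k) -
                   log2 (arg_g x k + t * (av v k - d k * v k))))).
  { intros t. unfold Rhat_k, fhat_k, g_k. rewrite sumK_line_sub.
    fold (arg_f x k) (arg_g (line x v t) k). rewrite arg_g_line. reflexivity. }
  unfold drate, log2. auto_derive; rewrite !Rmult_0_l, !Rplus_0_r; [lra | field; lra].
Qed.

Lemma is_derive_ratio_PN x v (N Nh : nat -> R -> R) (y r : nat -> R) :
  (forall k, (k < K)%nat -> N k 0 = y k /\ is_derive (N k) 0 (r k)) ->
  (forall k, (k < K)%nat -> Nh k 0 = y k /\ is_derive (Nh k) 0 (r k)) ->
  PNK x y <> 0 ->
  is_derive (fun t => sumK K (fun k => N k t) / PNK (line x v t) (fun k => Nh k t)) 0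
    ((sumK K r * PNK x y -
      sumK K y * (sumK K (fun k => Delta k * v k) + sumK K (fun k => beta k * r k)))
     / PNK x y ^ 2).
Proof.
  intros HN HNh Hy.
  assert (HN0 : sumK K (fun k => N k 0) = sumK K y)
    by (apply sumK_ext; intros k Hk; apply HN; auto).
  assert (HD0 : PNK (line x v 0) (fun k => Nh k 0) = PNK x y).
  { rewrite line_0. unfold PN. f_equal. apply sumK_ext. intros k Hk. f_equal.
    apply HNh; auto. }
  rewrite <- HN0, <- HD0. apply is_derive_div; [| | rewrite HD0; exact Hy].
  - apply is_derive_sumK. intros k Hk. apply HN; auto.
  - set (affine := fun t =>
      C0 + sumK K (fun k => Delta k * x k) + t * sumK K (fun k => Delta k * v k)).
    apply (@is_derive_ext R_AbsRing R_NormedModule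
      (fun t => plus (affine t) (sumK K (fun k => beta k * Nh k t)))).
    { intros t. unfold affine, PN. rewrite sumK_line. unfold plus; simpl. ring. }
    apply (is_derive_plus affine (fun t => sumK K (fun k => beta k * Nh k t))).
    + unfold affine. auto_derive; auto. ring.
    + apply is_derive_sumK. intros k Hk.
      apply (is_derive_scal (Nh k) 0 (beta k) (r k)). apply HNh; auto.
Qed.

Definition EE_dir (x v : nat -> R) : R :=
  (sumK K (drate x v) * PNK x (fun k => RK x k) -
   sumK K (fun k => RK x k) *
     (sumK K (fun k => Delta k * v k) + sumK K (fun k => beta k * drate x v k)))
  / PNK x (fun k => RK x k) ^ 2.

Lemma is_derive_EE_line x v : nonneg x -> is_derive (fun t => EEK (line x v t)) 0 (EE_dir x v).
Proof.
  intros Hx. pose proof (PN_R_k_pos x Hx). unfold EE.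
  apply (is_derive_ratio_PN x v (fun k t => RK (line x v t) k) (fun k t => RK (line x v t) k));
    [| | lra]; intros k Hk;
    (split; [rewrite line_0; reflexivity | apply is_derive_R_k_line; auto]).
Qed.

Lemma is_derive_EEbar_line x v :
  nonneg x -> is_derive (fun t => EEbarK (line x v t) x) 0 (EE_dir x v).
Proof.
  intros Hx. pose proof (PN_R_k_pos x Hx). unfold EEbar.
  apply (is_derive_ratio_PN x v (fun k t => RbarK (line x v t) x k)
                                (fun k t => RhatK (line x v t) x k));
    [| | lra]; intros k Hk; split; rewrite ?line_0.
  - apply Rbar_k_self.
  - apply is_derive_Rbar_k_line; auto.
  - apply Rhat_k_self.
  - apply is_derive_Rhat_k_line; auto.
Qed.

Lemma linear_form_drate x k : (k < K)%nat -> linear_form K (fun v => drate x v k).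
Proof.
  intros Hk. assert (Hav : linear_form K (fun v => av v k)).
  { apply (linear_form_sumK K K (fun k' v => a k k' * v k')). intros k' Hk'.
    apply (linear_form_scal K (a k k') (fun v => v k')), linear_form_coord; auto. }
  apply linear_form_scal, linear_form_minus; apply linear_form_div; auto.
  apply linear_form_minus; auto.
  apply (linear_form_scal K (d k) (fun v => v k)), linear_form_coord; auto.
Qed.

Lemma linear_form_EE_dir x : linear_form K (EE_dir x).
Proof.
  apply linear_form_div, linear_form_minus.
  - apply (linear_form_ext K _ (fun v => PNK x (fun k => RK x k) * sumK K (drate x v)));
      [intros; ring|].
    apply linear_form_scal, (linear_form_sumK K K (fun k v => drate x v k)).
    intros k Hk. apply linear_form_drate; auto.
  - apply linear_form_scal, linear_form_plus.
    + apply (linear_form_sumK K K (fun k v => Delta k * v k)). intros k Hk.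
      apply (linear_form_scal K (Delta k) (fun v => v k)), linear_form_coord; auto.
    + apply (linear_form_sumK K K (fun k v => beta k * drate x v k)). intros k Hk.
      apply (linear_form_scal K (beta k) (fun v => drate x v k)), linear_form_drate; auto.
Qed.

Lemma partial_EE x j : nonneg x -> partial EEK x j = EE_dir x (unit_vec j).
Proof.
  intros Hx. unfold partial. apply is_derive_unique.
  apply (@is_derive_ext R_AbsRing R_NormedModule
           (fun t => EEK (line x (unit_vec j) (t - x j)))).
  { intros t. rewrite upd_line. reflexivity. }
  replace (EE_dir x (unit_vec j)) with (scal 1 (EE_dir x (unit_vec j)))
    by apply (@scal_one R_Ring R_ModuleSpace).
  apply (is_derive_comp (fun s => EEK (line x (unit_vec j) s)) (fun t => t - x j)).
  - rewrite Rminus_diag. apply is_derive_EE_line; auto.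
  - auto_derive; auto.
Qed.

Lemma gradient_EE_dir x v :
  nonneg x -> sumK K (fun k => partial EEK x k * v k) = EE_dir x v.
Proof.
  intros Hx. rewrite (linear_form_EE_dir x v). apply sumK_ext. intros k Hk.
  rewrite partial_EE; auto.
Qed.

Section SLM.

Variables (Pmax : R) (gam : nat -> R) (Pseq : nat -> nat -> R) (Pst : nat -> R).

Local Notation FS := (feasible K Pmax a d n gam).

Hypothesis Hfeas0 : FS (Pseq O).
Hypothesis Hiter : forall m, is_argmax_on FS (fun P => EEbarK P (Pseq m)) (Pseq (S m)).
Hypothesis Hlim : limit_point K Pseq Pst.

Lemma feasible_nonneg P : FS P -> nonneg P.
Proof. intros HP k Hk. apply (HP k Hk). Qed.

Lemma feasible_line x Q t :
  FS x -> FS Q -> 0 <= t <= 1 -> FS (line x (fun i => Q i - x i) t).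
Proof.
  intros Hx HQ Ht k Hk.
  destruct (Hx k Hk) as [[Hx0 HxM] Hxc]. destruct (HQ k Hk) as [[HQ0 HQM] HQc].
  fold (arg_f x k) (arg_f Q k) in *. split; [unfold line; split; nra|].
  change (gam k * arg_f (line x (fun i => Q i - x i) t) k
          - (1 + gam k) * d k * line x (fun i => Q i - x i) t k <= 0).
  rewrite arg_f_line. unfold av. rewrite arg_f_sub. unfold line.
  replace (gam k * (arg_f x k + t * (arg_f Q k - arg_f x k)) -
           (1 + gam k) * d k * (x k + t * (Q k - x k)))
    with ((1 - t) * (gam k * arg_f x k - (1 + gam k) * d k * x k) +
          t * (gam k * arg_f Q k - (1 + gam k) * d k * Q k)) by ring.
  nra.
Qed.

Lemma feasible_Pseq m : FS (Pseq m).
Proof. destruct m; [apply Hfeas0 | apply (Hiter m)]. Qed.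

Lemma EE_le_EEbar_succ m : EEK (Pseq m) <= EEbarK (Pseq (S m)) (Pseq m).
Proof. rewrite <- EEbar_self. apply (Hiter m), feasible_Pseq. Qed.

Lemma EEbar_succ_le_EE m : EEbarK (Pseq (S m)) (Pseq m) <= EEK (Pseq (S m)).
Proof. apply EEbar_le_EE; apply feasible_nonneg, feasible_Pseq. Qed.

Lemma EE_Pseq_monotone m j : (m <= j)%nat -> EEK (Pseq m) <= EEK (Pseq j).
Proof.
  induction 1 as [|j _ IH]; [lra|].
  pose proof (EE_le_EEbar_succ j). pose proof (EEbar_succ_le_EE j). lra.
Qed.

Lemma feasible_limit : FS Pst.
Proof.
  intros k Hk.
  assert (Hbound : forall h, cont_at K h Pst ->
            (forall P, FS P -> 0 <= h P) -> 0 <= h Pst).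
  { intros h Hh HFS. apply (ge_at_limit_point K h Pseq Pst 0 0); auto.
    intros m _. apply HFS, feasible_Pseq. }
  split; [split|].
  - apply (Hbound (fun P => P k)); [solve_cont_at | intros P HP; apply (HP k Hk)].
  - enough (0 <= Pmax - Pst k) by lra.
    apply (Hbound (fun P => Pmax - P k)); [solve_cont_at|].
    intros P HP. destruct (HP k Hk) as [[_ HPM] _]. lra.
  - fold (arg_f Pst k).
    enough (0 <= - (gam k * arg_f Pst k - (1 + gam k) * d k * Pst k)) by lra.
    apply (Hbound (fun P => - (gam k * arg_f P k - (1 + gam k) * d k * P k))).
    + apply cont_at_opp. unfold arg_f. solve_cont_at.
    + intros P HP. destruct (HP k Hk) as [_ HPc]. fold (arg_f P k) in HPc. lra.
Qed.

Lemma EE_Pseq_le_limit m : EEK (Pseq m) <= EEK Pst.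
Proof.
  apply (ge_at_limit_point K EEK Pseq Pst _ m).
  - apply cont_at_EE, feasible_nonneg, feasible_limit.
  - exact Hlim.
  - intros j Hj. apply EE_Pseq_monotone, Hj.
Qed.

Lemma EEbar_limit_le_EE Q : FS Q -> EEbarK Q Pst <= EEK Pst.
Proof.
  intros HQ. enough (0 <= EEK Pst - EEbarK Q Pst) by lra.
  apply (ge_at_limit_point K (fun P0 => EEK Pst - EEbarK Q P0) Pseq Pst 0 0); auto.
  - apply cont_at_minus; [apply cont_at_const|].
    apply cont_at_EEbar_ref; apply feasible_nonneg; [apply feasible_limit | exact HQ].
  - intros m _.
    pose proof (proj2 (Hiter m) Q HQ). pose proof (EEbar_succ_le_EE m).
    pose proof (EE_Pseq_le_limit (S m)). cbv beta in *. lra.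
Qed.

Lemma limit_point_stationary : stationary K FS EEK Pst.
Proof.
  split; [apply feasible_limit|]. intros Q HQ.
  pose proof (feasible_nonneg _ feasible_limit) as Hnn.
  rewrite (gradient_EE_dir Pst (fun i => Q i - Pst i) Hnn).
  apply (derive_nonpos_of_max_right (fun t => EEbarK (line Pst (fun i => Q i - Pst i) t) Pst));
    [apply is_derive_EEbar_line; auto|].
  intros t Ht. rewrite line_0, EEbar_self.
  apply EEbar_limit_le_EE, feasible_line; auto; [apply feasible_limit | lra].
Qed.

End SLM.

End Model.

Theorem theorem1 (K : nat) (c Pmax : R) (a : nat -> nat -> R)
  (d n gam : nat -> R) (C0 : R) (Delta beta : nat -> R) :
  (1 <= K)%nat -> 0 < c -> 0 < Pmax ->
  (forall k k', (k < K)%nat -> (k' < K)%nat -> 0 <= a k k') ->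
  (forall k, (k < K)%nat -> 0 <= d k) ->
  (forall k, (k < K)%nat -> 0 < n k) ->
  (forall k, (k < K)%nat -> d k <= a k k) ->
  (forall k, (k < K)%nat -> 0 <= gam k) ->
  0 < C0 ->
  (forall k, (k < K)%nat -> 1 <= Delta k) ->
  (forall k, (k < K)%nat -> 0 < beta k) ->
  (exists P, feasible K Pmax a d n gam P) ->
  forall Pseq : nat -> nat -> R,
    feasible K Pmax a d n gam (Pseq O) ->
    (forall m : nat,
       is_argmax_on (feasible K Pmax a d n gam)
         (fun P => EEbar K c a d n C0 Delta beta P (Pseq m))
         (Pseq (S m))) ->
    forall Pst : nat -> R,
      limit_point K Pseq Pst ->
      stationary K (feasible K Pmax a d n gam)
        (EE K c a d n C0 Delta beta) Pst.
Proof.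
  intros _ Hc _ Ha Hd Hn Hda _ HC0 HDelta Hbeta _ Pseq Hfeas0 Hiter Pst Hlim.
  eapply limit_point_stationary; eauto.
  - lra.
  - intros k Hk. specialize (HDelta k Hk). lra.
  - intros k Hk. specialize (Hbeta k Hk). lra.
Qed.
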